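(* For every $N\in\mathbb N$, every $j_0\in\mathbb Z^d$ and every $(\varepsilon,\lambda)\in[0,\varepsilon_0]\times\Lambda$, setting $\mathtt M:=|B^0_{2,N}(j_0;\varepsilon,\lambda)|$, one has $B^0_N(j_0;\varepsilon,\lambda)\subset\bigcup_{q=1}^{2\mathtt MN^\tau}I_q$ where the $I_q$ are intervals with $|I_q|\leq N^{-\tau}$.
   Context: Setting. $d,\nu\geq1$; $|l|,|j|$ max norms, $\|j\|^2=\sum j_i^2$. $\bar\omega\in\mathbb R^\nu$, $|\bar\omega|\leq1$; $\Lambda=[1/2,3/2]$; $\tau>0$ a parameter; $\varepsilon_0>0$. $V\in C^r(\mathbb T^d;\mathbb R)$, $m$ its average, $V_0=V-m$. $f\in C^r(\mathbb T^\nu\times\mathbb T^d\times\mathbb R;\mathbb R)$, $(\varepsilon,\lambda)\mapsto u^+(\varepsilon,\lambda)\in H^s(\mathbb T^{\nu}\times\mathbb T^d;\mathbb C)$ ($s>(d+\nu)/2$), $p=f(\cdot,|u^+|^2)+f'(\cdot,|u^+|^2)|u^+|^2$, $q=f'(\cdot,|u^+|^2)(u^+)^2$ ($f'$ = derivative in the last variable). $T_1$ is the matrix of multiplication by $\begin{pmatrix}p&q\\\bar q&p\end{pmatrix}$ in the Fourier basis $e_{(l,j),a}$ ($a\in\{0,1\}$ labels the component). With $\omega=\lambda\bar\omega$, $A(\varepsilon,\lambda,\theta)=D+T_2-\varepsilon T_1+\theta Y$ (indexed by $(l,j,a)$), where $D$ is diagonal with entries $-\omega\cdot l+\|j\|^2+m$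 ($a=0$), $\omega\cdot l+\|j\|^2+m$ ($a=1$), $Y$ diagonal with entries $-1$ ($a=0$), $+1$ ($a=1$), and $T_2$ the matrix of multiplication by $V_0$ in each component. $A_{N,j_0}(\varepsilon,\lambda,\theta)$ is the (self-adjoint) restriction of $A$ to indices with $|l|\leq N$, $|j-j_0|\leq N$; $\|\cdot\|_0$ is the $L^2$ operator norm ($=+\infty$ for the inverse of a non-invertible matrix). $B^0_N(j_0;\varepsilon,\lambda):=\{\theta\in\mathbb R:\|A_{N,j_0}^{-1}(\varepsilon,\lambda,\theta)\|_0>N^\tau\}$ and $B^0_{2,N}(j_0;\varepsilon,\lambda):=\{\theta\in\mathbb R:\|A_{N,j_0}^{-1}(\varepsilon,\lambda,\theta)\|_0>N^\tau/2\}$; $|\cdot|$ denotes Lebesgue measure. *)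

From mathcomp Require Import all_boot all_order all_algebra.
From mathcomp Require Import all_classical all_reals all_analysis.
From mathcomp Require Export complex.
Set Implicit Arguments. Unset Strict Implicit. Unset Printing Implicit Defensive.
Import Order.TTheory GRing.Theory Num.Theory.
Local Open Scope ring_scope.

Section Defs.
Variable R : realType.
Local Notation C := R[i].

Definition vnorm n (x : 'cV[C]_n) : R :=
  Num.sqrt (\sum_i ((complex.Re (x i 0)) ^+ 2 + (complex.Im (x i 0)) ^+ 2)).

Definition opnorm n (B : 'M[C]_n) : \bar R :=
  ereal_sup [set (vnorm (B *m x))%:E | x in [set x : 'cV[C]_n | vnorm x = 1]].

Definition invnorm n (A : 'M[C]_n) : \bar R :=
  if A \in unitmx then opnorm (invmx A) else +oo%E.

(** Finite index set { (l, j, a) : |l| <= N, |j - j0| <= N, a in {0,1} },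
    encoded by ordinals: coordinate x : 'I_(2N+1) stands for x - N. The
    boolean a stands for the component label (false = 0, true = 1). *)
Definition Idx (nu d N : nat) : finType :=
  ({ffun 'I_nu -> 'I_(N.*2.+1)} * {ffun 'I_d -> 'I_(N.*2.+1)} * bool)%type.

Definition shift_vec k N (x : {ffun 'I_k -> 'I_(N.*2.+1)}) : 'rV[int]_k :=
  \row_i ((x i : nat)%:Z - N%:Z).

Definition idx_l nu d N (k : Idx nu d N) : 'rV[int]_nu := shift_vec k.1.1.
Definition idx_j nu d N (j0 : 'rV[int]_d) (k : Idx nu d N) : 'rV[int]_d :=
  j0 + shift_vec k.1.2.
Definition idx_a nu d N (k : Idx nu d N) : bool := k.2.

Definition dotl nu (om : 'rV[R]_nu) (l : 'rV[int]_nu) : R :=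
  \sum_i om 0 i * (l 0 i)%:~R.
Definition sqnorm d (j : 'rV[int]_d) : R := (\sum_i (j 0 i) ^+ 2)%:~R.

(** Entry ((l,j,a),(l',j',a')) of
      A(eps,lambda,theta) = D + T_2 - eps T_1 + theta Y
    where
    - D diagonal: -omega.l + ||j||^2 + m (a = 0), omega.l + ||j||^2 + m (a = 1),
      omega = lambda * omegabar;
    - Y diagonal: -1 (a = 0), +1 (a = 1);
    - T_2 = multiplication by V_0 in each component:
        delta_{a a'} delta_{l l'} V0hat (j - j');
    - T_1 = multiplication by [[p, q], [conj q, p]]:
        a=a'     : phat (l - l', j - j'),
        (0,1)    : qhat (l - l', j - j'),
        (1,0)    : (conj q)hat (l - l', j - j') = conj (qhat (l' - l, j' - j)).
    V0hat : Fourier coefficients of V_0 = V - m on T^d;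
    phat, qhat eps lambda : Fourier coefficients of p, q on T^nu x T^d
    (which depend on (eps, lambda) through u^+(eps, lambda)). *)
Definition A_entry nu d (m : R) (omegabar : 'rV[R]_nu)
    (V0hat : 'rV[int]_d -> C)
    (phat qhat : R -> R -> 'rV[int]_nu -> 'rV[int]_d -> C)
    (eps lam theta : R) (N : nat) (j0 : 'rV[int]_d) (k k' : Idx nu d N) : C :=
  let l := idx_l k in let l' := idx_l k' in
  let j := idx_j j0 k in let j' := idx_j j0 k' in
  let a := idx_a k in let a' := idx_a k' in
  let om := lam *: omegabar in
  let Dk : R := (if a then dotl om l else - dotl om l) + sqnorm j + m in
  let Yk : R := if a then 1 else -1 in
  let diag : C := if k == k' then ((Dk + theta * Yk)%:C)%C else 0 in
  let T2 : C := if (a == a') && (l == l') then V0hat (j - j') else 0 in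
  let T1 : C :=
    match a, a' with
    | false, false | true, true => phat eps lam (l - l') (j - j')
    | false, true => qhat eps lam (l - l') (j - j')
    | true, false => (qhat eps lam (l' - l) (j' - j))^*
    end in
  diag + T2 - (eps%:C)%C * T1.

Definition A_trunc nu d (m : R) (omegabar : 'rV[R]_nu)
    (V0hat : 'rV[int]_d -> C)
    (phat qhat : R -> R -> 'rV[int]_nu -> 'rV[int]_d -> C)
    (eps lam theta : R) (N : nat) (j0 : 'rV[int]_d) : 'M[C]_#|{: Idx nu d N}| :=
  \matrix_(i, i') A_entry m omegabar V0hat phat qhat eps lam theta j0
                   (enum_val i) (enum_val i').

Definition B0 nu d (m : R) (omegabar : 'rV[R]_nu)
    (V0hat : 'rV[int]_d -> C)
    (phat qhat : R -> R -> 'rV[int]_nu -> 'rV[int]_d -> C)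
    (tau : R) (N : nat) (j0 : 'rV[int]_d) (eps lam : R) : set R :=
  [set theta | ((N%:R `^ tau)%:E <
     invnorm (A_trunc m omegabar V0hat phat qhat eps lam theta N j0))%E].

Definition B0_2 nu d (m : R) (omegabar : 'rV[R]_nu)
    (V0hat : 'rV[int]_d -> C)
    (phat qhat : R -> R -> 'rV[int]_nu -> 'rV[int]_d -> C)
    (tau : R) (N : nat) (j0 : 'rV[int]_d) (eps lam : R) : set R :=
  [set theta | ((N%:R `^ tau / 2)%:E <
     invnorm (A_trunc m omegabar V0hat phat qhat eps lam theta N j0))%E].

End Defs.

From mathcomp Require Import all_boot all_order all_algebra.
From mathcomp Require Import all_classical all_reals all_analysis.
From mathcomp Require Import complex.
From mathcomp Require Import ring lra.
Import Order.TTheory GRing.Theory Num.Theory.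
Local Open Scope ring_scope.

(* The parameter θ enters A(θ) = A_{N,j0}(ε,λ,θ) only through θY, where Y = diag(∓1) is an
   isometry; hence θ ↦ ‖A(θ)x‖ is 1-Lipschitz for every unit vector x.  Since θ ∈ B^0_N iff
   ‖A(θ)x‖ < N^-τ for some unit x, the N^-τ-neighbourhood of B^0_N lies in B^0_{2,N}, and
   B^0_N is bounded.  Cut a window containing B^0_N into half-open cells of length N^-τ: the
   cells meeting B^0_N are disjoint and contained in B^0_{2,N}, so there are at most M N^τ of
   them. *)

Lemma sqr_le_mul_of_quadratic_ge0 (F : realFieldType) (U S V : F) : 0 <= V ->
  (forall t, 0 <= U + 2 * t * S + t ^+ 2 * V) -> S ^+ 2 <= U * V.
Proof.
move=> V_ge0 quad_ge0; have [V0|V_neq0] := eqVneq V 0.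
  rewrite V0 mulr0; have [->|S_neq0] := eqVneq S 0; first by rewrite expr0n.
  have := quad_ge0 (- (U + 1) / (2 * S)); rewrite V0 mulr0 addr0.
  have -> : U + 2 * (- (U + 1) / (2 * S)) * S = -1 by field.
  by rewrite lerNr oppr0 ler10.
have V_gt0 : 0 < V by rewrite lt_def V_neq0.
have := quad_ge0 (- S / V).
have -> : U + 2 * (- S / V) * S + (- S / V) ^+ 2 * V = (U * V - S ^+ 2) / V by field.
by rewrite pmulr_lge0 ?invr_gt0 // subr_ge0.
Qed.

Section EuclideanNorm.
Context {R : realType}.
Local Notation C := R[i].

Definition sqmodc (z : C) : R := complex.Re z ^+ 2 + complex.Im z ^+ 2.

Lemma sqmodc_ge0 z : 0 <= sqmodc z.
Proof. by rewrite addr_ge0 ?sqr_ge0. Qed.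

Lemma sqmodcM x y : sqmodc (x * y) = sqmodc x * sqmodc y.
Proof. by case: x => a b; case: y => c e; rewrite /sqmodc /=; ring. Qed.

Lemma sqmodcR (r : R) : sqmodc r%:C%C = r ^+ 2.
Proof. by rewrite /sqmodc /= expr0n addr0. Qed.

Lemma sqmodc_eq0 z : sqmodc z = 0 -> z = 0.
Proof. by move=> z0; apply/eqP; rewrite -normr_eq0 normc_def -/(sqmodc z) z0 sqrtr0. Qed.

Context {n : nat}.
Implicit Types (x y : 'cV[C]_n) (B : 'M[C]_n).

Definition sqvnorm x : R := \sum_i sqmodc (x i 0).

Definition vdot x y : R :=
  \sum_i (complex.Re (x i 0) * complex.Re (y i 0) + complex.Im (x i 0) * complex.Im (y i 0)).

Lemma vnormE x : vnorm x = Num.sqrt (sqvnorm x).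
Proof. by []. Qed.

Lemma sqvnorm_ge0 x : 0 <= sqvnorm x.
Proof. by apply: sumr_ge0 => i _; apply: sqmodc_ge0. Qed.

Lemma vnorm_ge0 x : 0 <= vnorm x.
Proof. exact: sqrtr_ge0. Qed.

Lemma sqvnormD x y : sqvnorm (x + y) = sqvnorm x + 2 * vdot x y + sqvnorm y.
Proof.
rewrite /sqvnorm /vdot mulr_sumr -!big_split /=; apply: eq_bigr => i _.
by rewrite mxE; case: (x i 0) => a b; case: (y i 0) => c e; rewrite /sqmodc /=; ring.
Qed.

Lemma sqvnormZ c x : sqvnorm (c *: x) = sqmodc c * sqvnorm x.
Proof. by rewrite /sqvnorm mulr_sumr; apply: eq_bigr => i _; rewrite mxE sqmodcM. Qed.

Lemma vdotZr (r : R) x y : vdot x (r%:C%C *: y) = r * vdot x y.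
Proof.
rewrite /vdot mulr_sumr; apply: eq_bigr => i _.
by rewrite mxE; case: (x i 0) => a b; case: (y i 0) => c e /=; ring.
Qed.

Lemma vdot_le x y : vdot x y <= vnorm x * vnorm y.
Proof.
have quad_ge0 t : 0 <= sqvnorm x + 2 * t * vdot x y + t ^+ 2 * sqvnorm y.
  by have := sqvnorm_ge0 (x + t%:C%C *: y); rewrite sqvnormD sqvnormZ sqmodcR vdotZr mulrA.
apply: le_trans (ler_norm _) _; rewrite -sqrtr_sqr !vnormE -sqrtrM ?sqvnorm_ge0 //.
by rewrite ler_sqrt ?mulr_ge0 ?sqvnorm_ge0 // sqr_le_mul_of_quadratic_ge0 ?sqvnorm_ge0.
Qed.

Lemma vnormD x y : vnorm (x + y) <= vnorm x + vnorm y.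
Proof.
rewrite -ler_sqr ?nnegrE ?addr_ge0 ?vnorm_ge0 // sqrrD !vnormE !sqr_sqrtr ?sqvnorm_ge0 //.
rewrite sqvnormD lerD2r lerD2l -[in X in _ <= X]mulr_natl -!vnormE.
by apply: ler_wpM2l; [|exact: vdot_le].
Qed.

Lemma vnormZ c x : vnorm (c *: x) = Num.sqrt (sqmodc c) * vnorm x.
Proof. by rewrite !vnormE sqvnormZ sqrtrM // sqmodc_ge0. Qed.

Lemma vnormZR (r : R) x : vnorm (r%:C%C *: x) = `|r| * vnorm x.
Proof. by rewrite vnormZ sqmodcR sqrtr_sqr. Qed.

Lemma vnormN x : vnorm (- x) = vnorm x.
Proof. by rewrite -scaleN1r vnormZ /sqmodc /= oppr0 sqrrN expr1n expr0n addr0 sqrtr1 mul1r. Qed.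

Lemma vnorm0 : vnorm (0 : 'cV[C]_n) = 0.
Proof. by rewrite -(scale0r (0 : 'cV[C]_n)) vnormZ /sqmodc /= expr0n addr0 sqrtr0 mul0r. Qed.

Lemma vnorm_eq0 x : vnorm x = 0 -> x = 0.
Proof.
rewrite vnormE => /eqP; rewrite sqrtr_eq0 => x_le0.
have x0 : sqvnorm x = 0 by apply/eqP; rewrite eq_le x_le0 sqvnorm_ge0.
apply/matrixP => i j; rewrite ord1 mxE; apply: sqmodc_eq0.
exact: (psumr_eq0P (fun i _ => sqmodc_ge0 _) x0).
Qed.

Lemma vnorm_gt0 x : x != 0 -> 0 < vnorm x.
Proof. by move=> x0; rewrite lt_def vnorm_ge0 andbT; apply: contra x0 => /eqP/vnorm_eq0->. Qed.

Lemma vnorm_normalize x : x != 0 -> vnorm ((vnorm x)^-1%:C%C *: x) = 1.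
Proof.
move=> x0; rewrite vnormZR ger0_norm ?invr_ge0 ?vnorm_ge0 // mulVf //.
by rewrite gt_eqF // vnorm_gt0.
Qed.

Lemma vnorm_sum (I : Type) (r : seq I) (F : I -> 'cV[C]_n) :
  vnorm (\sum_(i <- r) F i) <= \sum_(i <- r) vnorm (F i).
Proof.
elim: r => [|a r IH]; first by rewrite !big_nil vnorm0.
by rewrite !big_cons; apply: le_trans (vnormD _ _) _; apply: lerD.
Qed.

Lemma vnorm_mulmx_le B x : vnorm (B *m x) <= (\sum_j vnorm (col j B)) * vnorm x.
Proof.
have -> : B *m x = \sum_j x j 0 *: col j B.
  apply/matrixP => i k; rewrite ord1 mxE summxE; apply: eq_bigr => j _.
  by rewrite !mxE mulrC.
rewrite mulr_suml; apply: le_trans (vnorm_sum _ _ _) _; apply: ler_sum => j _.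
rewrite vnormZ mulrC ler_wpM2l ?vnorm_ge0 // vnormE ler_sqrt ?sqvnorm_ge0 //.
by rewrite /sqvnorm (bigD1 j) //= lerDl sumr_ge0 // => i _; apply: sqmodc_ge0.
Qed.

Lemma vnorm_diag_mx_unimodular (D : 'rV[C]_n) x :
  (forall i, sqmodc (D 0 i) = 1) -> vnorm (diag_mx D *m x) = vnorm x.
Proof.
move=> D1; rewrite !vnormE /sqvnorm; congr Num.sqrt; apply: eq_bigr => i _.
by rewrite mul_diag_mx mxE sqmodcM D1 mul1r.
Qed.

Lemma invnorm_gtP B (r : R) : 0 < r ->
  (r%:E < invnorm B)%E <-> exists2 x, vnorm x = 1 & vnorm (B *m x) < r^-1.
Proof.
move=> r_gt0; rewrite /invnorm; case: ifPn => [B_unit|B_sing]; split.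
- rewrite /opnorm => /ereal_sup_gt [_ [y y1 <-]]; rewrite lte_fin => r_lt.
  have z0 : invmx B *m y != 0.
    by apply: contraTneq r_lt => ->; rewrite vnorm0 -leNgt ltW.
  exists ((vnorm (invmx B *m y))^-1%:C%C *: (invmx B *m y)); first exact: vnorm_normalize.
  rewrite -scalemxAr mulKVmx // vnormZR y1 mulr1 ger0_norm ?invr_ge0 ?vnorm_ge0 //.
  by rewrite ltf_pV2 ?posrE // vnorm_gt0.
- move=> [x x1 Bx_lt]; have Bx0 : B *m x != 0.
    apply/eqP => Bx0; move: x1; rewrite -(mulKmx B_unit x) Bx0 mulmx0 vnorm0.
    by move/eqP; rewrite eq_sym oner_eq0.
  apply: (@lt_le_trans _ _ (vnorm (B *m x))^-1%:E).
    by rewrite lte_fin -[r]invrK ltf_pV2 ?posrE ?invr_gt0 ?vnorm_gt0.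
  apply: ereal_sup_ubound; exists ((vnorm (B *m x))^-1%:C%C *: (B *m x)).
    exact: vnorm_normalize.
  by rewrite -scalemxAr mulKmx // vnormZR x1 mulr1 ger0_norm ?invr_ge0 ?vnorm_ge0.
- move=> _; move: B_sing; rewrite unitmxE unitfE negbK -det_tr => /det0P[v v0 vB0].
  have vT0 : v^T != 0 by apply: contra v0 => /eqP vT0; rewrite -(trmxK v) vT0 linear0.
  exists ((vnorm v^T)^-1%:C%C *: v^T); first exact: vnorm_normalize.
  by rewrite -scalemxAr -(trmxK B) -trmx_mul vB0 linear0 scaler0 vnorm0 invr_gt0.
- by move=> _; apply: ltry.
Qed.

End EuclideanNorm.

Section AffinePencil.
Context {R : realType} {n : nat} {A : R -> 'M[R[i]]_n} {Y : 'M[R[i]]_n}.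
Hypothesis A_affine : forall t, A t = A 0 + t%:C%C *: Y.
Hypothesis Y_isometry : forall x, vnorm (Y *m x) = vnorm x.

Lemma vnorm_mulmx_pencil_le t t' x :
  vnorm (A t *m x) <= vnorm (A t' *m x) + `|t - t'| * vnorm x.
Proof.
have -> : A t = A t' + (t - t')%:C%C *: Y.
  by rewrite A_affine [A t']A_affine -addrA -scalerDl -rmorphD /= addrCA subrr addr0.
rewrite mulmxDl -scalemxAl -(Y_isometry x) -vnormZR; exact: vnormD.
Qed.

Lemma invnorm_pencil_gt_near del t t' : 0 < del ->
  (del^-1%:E < invnorm (A t))%E -> `|t' - t| < del -> ((2 * del)^-1%:E < invnorm (A t'))%E.
Proof.
move=> del_gt0; have delV_gt0 : 0 < del^-1 by rewrite invr_gt0.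
move=> /(invnorm_gtP _ _ delV_gt0)[x x1]; rewrite invrK => Atx_lt tt'_lt.
apply/invnorm_gtP; first by rewrite invr_gt0 mulr_gt0.
exists x => //; rewrite invrK mulr2n mulrDl mul1r.
by apply: le_lt_trans (vnorm_mulmx_pencil_le t' t x) _; rewrite x1 mulr1 ltrD.
Qed.

Lemma invnorm_pencil_gt_bound r t : 0 < r -> (r%:E < invnorm (A t))%E ->
  `|t| < \sum_j vnorm (col j (A 0)) + r^-1.
Proof.
move=> r_gt0 /(invnorm_gtP _ _ r_gt0)[x x1 Atx_lt].
have -> : `|t| = vnorm (A t *m x + - (A 0 *m x)).
  by rewrite A_affine mulmxDl addrAC subrr add0r -scalemxAl vnormZR Y_isometry x1 mulr1.
apply: le_lt_trans (vnormD _ _) _; rewrite vnormN addrC ler_ltD //.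
by apply: le_trans (vnorm_mulmx_le _ _) _; rewrite x1 mulr1.
Qed.

End AffinePencil.

Section GridCover.
Local Open Scope classical_set_scope.
Context {R : realType}.

Lemma grid_cellE (lo del t : R) (k : nat) : 0 < del -> lo <= t ->
  (lo + k%:R * del <= t < lo + k%:R * del + del) = (Num.truncn ((t - lo) / del) == k).
Proof.
move=> del_gt0 lo_le_t; rewrite truncn_eq; last by rewrite divr_ge0 ?subr_ge0 // ltW.
rewrite ler_pdivlMr // ltr_pdivrMr // -natr1 mulrDl mul1r.
by apply/idP/idP => /andP[? ?]; apply/andP; split; lra.
Qed.

Lemma cover_by_short_intervals (S T : set R) (L del : R) : 0 < del ->
    (forall t, S t -> `|t| < L) ->
    (forall t t', S t -> `|t' - t| < del -> T t') ->
  exists (K : nat) (a : 'I_K -> R),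
    ((K%:R * del)%:E <= lebesgue_measure T)%E /\
    (forall t, S t -> exists q, a q <= t <= a q + del).
Proof.
move=> del_gt0 S_bounded S_near.
pose lo (k : nat) := - L + k%:R * del.
pose cell (k : nat) : set R := [set` `[lo k, lo k + del[%R].
have cell_ge t k : cell k t -> - L <= t.
  rewrite /cell /= in_itv /= => /andP[+ _]; apply: le_trans.
  by rewrite lerDl mulr_ge0 // ltW.
have cellE t k : - L <= t -> cell k t = (Num.truncn ((t + L) / del) == k).
  by move=> Lt; rewrite /cell /= in_itv /= -/(lo k) grid_cellE // opprK.
pose Kmax := (Num.truncn (2 * L / del)).+1.
pose hit : {pred 'I_Kmax} := fun k => `[< exists2 t, S t & cell k t >].
exists #|hit|, (fun q : 'I_#|hit| => lo (enum_val q)); split.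
- have cell_disj : trivIset hit (fun k : 'I_Kmax => cell k).
    move=> i j _ _ [t [ti tj]]; have Lt := cell_ge _ _ ti; apply: val_inj.
    by move: ti tj; rewrite !cellE // => /eqP -> /eqP.
  have cell_sub (k : 'I_Kmax) : hit k -> cell k `<=` T.
    move=> /asboolP[s Ss sk] t tk; apply: (S_near s) => //.
    move: sk tk; rewrite /cell /= !in_itv /= => /andP[? ?] /andP[? ?].
    by rewrite ltr_norml; apply/andP; split; lra.
  have cells_sub : \big[setU/set0]_(k < Kmax | hit k) cell k `<=` T.
    by apply: (big_ind (fun X => X `<=` T)) => // X Y XT YT t [/XT|/YT].
  apply: le_trans (le_outer_measure lebesgue_measure _ _ cells_sub).
  rewrite (measure_bigsetU_ord_cond lebesgue_measure) //; last by move=> k _; exact: measurable_itv.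
  rewrite (eq_bigr (fun=> del%:E)); last first.
    move=> k _; apply: eq_trans (lebesgue_measure_itv _) _.
    by rewrite /= lte_fin ltrDl del_gt0 -EFinD addrAC subrr add0r.
  by rewrite sumEFin sumr_const mulr_natl.
move=> t St; have /ltr_normlP[Lt tL] := S_bounded t St.
have L_le_t : - L <= t by rewrite lerNl ltW.
pose k := Num.truncn ((t + L) / del).
have k_lt : (k < Kmax)%N.
  by rewrite ltnS le_truncn // ler_pM2r ?invr_gt0 //; lra.
have k_hit : Ordinal k_lt \in hit.
  by apply/asboolP; exists t; rewrite // cellE.
exists (enum_rank_in k_hit (Ordinal k_lt)); rewrite enum_rankK_in //=.
have : cell k t by rewrite cellE.
by rewrite /cell /= in_itv /= => /andP[-> /ltW ->].
Qed.

End GridCover.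

Definition sign_mx {R : realType} (nu d N : nat) : 'M[R[i]]_#|{: Idx nu d N}| :=
  diag_mx (\row_i (if idx_a (enum_val i) then 1 else -1)).

Lemma vnorm_sign_mx (R : realType) (nu d N : nat) (x : 'cV[R[i]]_#|{: Idx nu d N}|) :
  vnorm (sign_mx nu d N *m x) = vnorm x.
Proof.
apply: vnorm_diag_mx_unimodular => i; rewrite mxE.
by case: (idx_a _); rewrite /sqmodc /= ?oppr0 ?sqrrN expr1n expr0n addr0.
Qed.

Section TruncatedMatrix.
Variables (R : realType) (nu d : nat) (m : R) (omegabar : 'rV[R]_nu)
  (V0hat : 'rV[int]_d -> R[i]) (phat qhat : R -> R -> 'rV[int]_nu -> 'rV[int]_d -> R[i])
  (eps lam : R) (N : nat) (j0 : 'rV[int]_d).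

Lemma A_trunc_affine t : A_trunc m omegabar V0hat phat qhat eps lam t N j0 =
  A_trunc m omegabar V0hat phat qhat eps lam 0 N j0 + t%:C%C *: sign_mx nu d N.
Proof.
apply/matrixP => i i'; rewrite !mxE /A_entry /= (inj_eq enum_val_inj).
case: eqP => [<-|_]; last by rewrite mulr0 addr0.
by case: (idx_a _); rewrite !rmorphD !rmorphM ?rmorphN ?rmorph1 /=; ring.
Qed.

End TruncatedMatrix.

Theorem lemma6p4 (R : realType) (nu d : nat) (omegabar : 'rV[R]_nu)
    (tau eps0 m : R) (V0hat : 'rV[int]_d -> R[i])
    (phat qhat : R -> R -> 'rV[int]_nu -> 'rV[int]_d -> R[i]) :
  (1 <= nu)%N -> (1 <= d)%N ->
  (forall i, `|omegabar 0 i| <= 1) ->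
  0 < tau -> 0 < eps0 ->
  (* V real, V_0 = V - m has zero average *)
  V0hat 0 = 0 -> (forall j, V0hat (- j) = (V0hat j)^*) ->
  (* p real-valued *)
  (forall e lam l j, phat e lam (- l) (- j) = (phat e lam l j)^*) ->
  forall (N : nat) (j0 : 'rV[int]_d) (eps lam : R),
  (1 <= N)%N ->
  0 <= eps <= eps0 -> 2^-1 <= lam <= 3 / 2 ->
  let M := lebesgue_measure (B0_2 m omegabar V0hat phat qhat tau N j0 eps lam) in
  exists (K : nat) (a b : 'I_K -> R),
    ((K%:R)%:E <= 2%:E * M * (N%:R `^ tau)%:E)%E /\
    (forall q, a q <= b q /\ b q - a q <= N%:R `^ (- tau)) /\
    (forall theta, B0 m omegabar V0hat phat qhat tau N j0 eps lam theta ->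
       exists q, a q <= theta <= b q).
Proof.
move=> _ _ _ _ _ _ _ _ N j0 eps lam N_ge1 _ _ M.
pose A t := A_trunc m omegabar V0hat phat qhat eps lam t N j0.
have A_affine t : A t = A 0 + t%:C%C *: sign_mx nu d N by exact: A_trunc_affine.
set del := N%:R `^ (- tau).
have del_gt0 : 0 < del by rewrite powR_gt0 // ltr0n.
have delE : N%:R `^ tau = del^-1 by rewrite /del powRN invrK.
have B0_bounded t : B0 m omegabar V0hat phat qhat tau N j0 eps lam t ->
    `|t| < \sum_j vnorm (col j (A 0)) + del.
  rewrite /B0 /= delE -[X in _ + X](invrK del).
  by apply: (invnorm_pencil_gt_bound A_affine (@vnorm_sign_mx R nu d N)); rewrite invr_gt0.
have B0_near t t' : B0 m omegabar V0hat phat qhat tau N j0 eps lam t ->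
    `|t' - t| < del -> B0_2 m omegabar V0hat phat qhat tau N j0 eps lam t'.
  rewrite /B0 /B0_2 /= delE -invfM mulrC.
  exact: (invnorm_pencil_gt_near A_affine (@vnorm_sign_mx R nu d N) _ _ _ del_gt0).
have [K [a [Kdel_le covered]]] := cover_by_short_intervals _ _ _ _ del_gt0 B0_bounded B0_near.
exists K, a, (fun q => a q + del); split; last split.
- have -> : (K%:R%:E = (K%:R * del)%:E * (del^-1)%:E)%E by rewrite -EFinM mulfK // gt_eqF.
  rewrite delE -muleA; apply: le_trans (lee_wpmul2r _ Kdel_le) _.
    by rewrite lee_fin invr_ge0 ltW.
  by rewrite lee_pemull ?mule_ge0 // lee_fin ?invr_ge0 ?ler1n // ltW.
- by move=> q; rewrite lerDl ltW // addrC addKr.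
- exact: covered.
Qed.
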